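(* Let $\mathcal{A}\subseteq\mathbb{R}^n$, let $k$ be a kernel on $\mathcal{A}$ with reproducing kernel Hilbert space $H_k$ and norm $\|\cdot\|_k$, and let $h(\cdot,i)\in H_k$ be an unknown function, where $i\in\mathcal{I}$ is fixed. Fix a finite set of sampled parameters $A=\{a_1,\ldots,a_N\}\subseteq\mathcal{A}$ together with the corresponding noisy measurements $\hat h_{A,i}$ of $h(\cdot,i)$. Let $\rho_{A,1}(\cdot,i),\ldots,\rho_{A,q}(\cdot,i)$ be $q$ random RKHS functions, generated independently and identically (conditionally on $A$ and $\hat h_{A,i}$) by the random construction described in the context, and assume that \[ \|h(\cdot,i)\|_k\;\le\;\lim_{q\to\infty}\frac{1}{q}\sum_{j=1}^{q}\|\rho_{A,j}(\cdot,i)\|_k . \] Let $\delta\in(0,1)$ and define \[ w_i:=\sqrt{\frac{\ln\!\big(\tfrac{2}{\delta}\big)\,\Big(\max_{\alpha,x}\|\rho_{A}(\cdot,i)\|_k-\min_{\alpha,x}\|\rho_{A}(\cdot,i)\|_k\Big)^2}{2q}}, \] where the maximum and minimum are taken over all admissible values of the random coefficients $\alpha$ and center points $x$ in the construction. If \[ B_i\;\ge\;\frac{1}{q}\sum_{j=1}^{q}\|\rho_{A,j}(\cdot,i)\|_k+w_i, \] then $B_i\ge\|h(\cdot,i)\|_k$ with probability at least $1-\delta$ (with respect to the random generation of $\rho_{A,1},\ldots,\rho_{A,q}$).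
   Context: Random RKHS function construction: fix an integer $\hat N\gg N$ and a bound $\overline\alpha>0$. Each random function has the form $\rho_{A,j}(\cdot,i)=\sum_{s=1}^{\hat N}\alpha_s k(x_s,\cdot)$, so that $\|\rho_{A,j}(\cdot,i)\|_k^2=\sum_{s=1}^{\hat N}\sum_{t=1}^{\hat N}\alpha_s\alpha_t k(x_s,x_t)$. The first $N$ center points are the samples, $x_1,\ldots,x_N=a_1,\ldots,a_N$, and the first $N$ coefficients $\alpha_1,\ldots,\alpha_N$ are determined by the samples $A$ and measurements $\hat h_{A,i}$ (so that the function interpolates the data up to the measurement noise). The remaining coefficients $\alpha_{N+1},\ldots,\alpha_{\hat N}$ are drawn independently and uniformly from $[-\overline\alpha,\overline\alpha]$, and the remaining center points $x_{N+1},\ldots,x_{\hat N}$ are drawn independently and uniformly from $\mathcal{A}$. Different functions $\rho_{A,j}$, $j=1,\ldots,q$, are generated independently. The measurements are of the form $\hat h(a,i)=h(a,i)+\epsilon$ with $\sigma$-sub-Gaussian noise $\epsilon$. $B_i$ is a candidate upper bound on the RKHS norm $\|h(\cdot,i)\|_k$. *)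

From HB Require Import structures.
From mathcomp Require Import all_boot all_order all_algebra.
From mathcomp Require Import all_classical all_reals all_analysis.
Set Implicit Arguments. Unset Strict Implicit. Unset Printing Implicit Defensive.
Import Order.TTheory GRing.Theory Num.Theory.
Import numFieldNormedType.Exports.
Local Open Scope classical_set_scope.
Local Open Scope ring_scope.

Definition is_kernel (R : realType) (n : nat) (Adom : set 'rV[R]_n)
  (k : 'rV[R]_n -> 'rV[R]_n -> R) : Prop :=
  (forall x y, Adom x -> Adom y -> k x y = k y x) /\
  (forall (m : nat) (c : 'I_m -> R) (x : 'I_m -> 'rV[R]_n),
     (forall s, Adom (x s)) ->
     0 <= \sum_(s < m) \sum_(t < m) c s * c t * k (x s) (x t)).

(* squared RKHS norm of  sum_s c_s k(x_s, .)  (finite index type I) *)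
Definition comb_sqnorm (R : realType) (n : nat) (I : finType)
  (k : 'rV[R]_n -> 'rV[R]_n -> R) (c : I -> R) (x : I -> 'rV[R]_n) : R :=
  \sum_(s : I) \sum_(t : I) c s * c t * k (x s) (x t).

Definition comb_norm (R : realType) (n : nat) (I : finType)
  (k : 'rV[R]_n -> 'rV[R]_n -> R) (c : I -> R) (x : I -> 'rV[R]_n) : R :=
  Num.sqrt (comb_sqnorm k c x).

(* RKHS norm ||f||_k of an arbitrary function f on Adom (extended real):
   sup of <f, g>_k over g = sum_s c_s k(x_s,.) in the span of kernel sections
   with ||g||_k <= 1 (reproducing property <f, k(x,.)> = f x).  It is finite
   iff f belongs to H_k, and then coincides with the Hilbert norm of f. *)
Definition rkhs_norm (R : realType) (n : nat) (Adom : set 'rV[R]_n)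
  (k : 'rV[R]_n -> 'rV[R]_n -> R) (f : 'rV[R]_n -> R) : \bar R :=
  ereal_sup [set r : \bar R | exists (m : nat) (c : 'I_m -> R) (x : 'I_m -> 'rV[R]_n),
     [/\ forall s, Adom (x s), comb_sqnorm k c x <= 1 &
          r = (\sum_(s < m) c s * f (x s))%:E]].

(* coefficients / centers of rho: first N fixed (data), then K random ones *)
Definition join_fun (T : Type) (N K : nat) (u : 'I_N -> T) (v : 'I_K -> T)
  (s : 'I_N + 'I_K) : T :=
  match s with inl i => u i | inr i => v i end.

(* the RKHS norm of rho = sum_{s <= N} alpha0_s k(a_s, .) + sum_{s > N} alpha_s k(x_s, .) *)
Definition rho_norm (R : realType) (n N K : nat)
  (k : 'rV[R]_n -> 'rV[R]_n -> R) (alpha0 : 'I_N -> R) (a : 'I_N -> 'rV[R]_n)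
  (alpha : 'I_K -> R) (x : 'I_K -> 'rV[R]_n) : R :=
  comb_norm k (join_fun alpha0 alpha) (join_fun a x).

Definition admissible (R : realType) (n K : nat) (Adom : set 'rV[R]_n)
  (abar : R) (alpha : 'I_K -> R) (x : 'I_K -> 'rV[R]_n) : Prop :=
  (forall s, - abar <= alpha s <= abar) /\ (forall s, Adom (x s)).

Definition mutually_independent (R : realType) (d : measure_display)
  (Omega : measurableType d) (P : probability Omega R) (X : nat -> Omega -> R) : Prop :=
  forall (J : seq nat) (B : nat -> set R), uniq J ->
    (forall j, j \in J -> measurable (B j)) ->
    P (\bigcap_(j in [set j | j \in J]) (X j @^-1` B j)) =
    (\prod_(j <- J) P (X j @^-1` B j))%E.

Definition identically_distributed (R : realType) (d : measure_display)
  (Omega : measurableType d) (P : probability Omega R) (X : nat -> Omega -> R) : Prop :=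
  forall j (B : set R), measurable B -> P (X j @^-1` B) = P (X 0%N @^-1` B).

Definition emp_mean (R : realType) (T : Type) (X : nat -> T -> R) (q : nat) (w : T) : R :=
  q%:R^-1 * \sum_(j < q) X j w.

From HB Require Import structures.
From mathcomp Require Import all_boot all_order all_algebra.
From mathcomp Require Import all_classical all_reals all_analysis.
From mathcomp Require Import ring lra measurable_realfun.
Set Implicit Arguments. Unset Strict Implicit. Unset Printing Implicit Defensive.
Import Order.TTheory GRing.Theory Num.Theory.
Import numFieldNormedType.Exports.
Local Open Scope classical_set_scope.
Local Open Scope ring_scope.

(* Independence is only available for events {Z_j in B}, so expectations are
   replaced by a discretisation: cutting [a, b] into m bins makes each Z_j
   finite-valued, its moment generating function a finite sum, and the Chernoff
   bound a sum over bin assignments, controlled by Hoeffding's lemma for finite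
   distributions.  The lower binned mean mu_m and the upper one mu_m + (b - a)/m
   bracket the limit of the empirical means: the upper Chernoff tail shows that
   the limit cannot exceed mu_m + (b - a)/m with positive probability, and the
   lower tail then gives
     P(sum_{k<q} Z_k < q (c - t)) <= exp(-2 q t^2/(b - a)^2) exp(4 q t/((b - a) m))
   for every m, hence Hoeffding's bound.  For t = w_i this is delta/2. *)

Section hoeffding_lemma.
Variable R : realType.

Lemma expR_mul_1_sub_half (v : R) : 0 <= v -> expR v * (1 - v / 2) <= 1 + v / 2.
Proof.
move=> v0.
pose g := (cst 1 + 2^-1 *: id - expR * (cst 1 - 2^-1 *: id) : R -> R).
have gE y : g y = 1 + y / 2 - expR y * (1 - y / 2).
  by rewrite /g /cst /= !fctE /= -[_ *: y]/(2^-1 * y); lra.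
have g_derive (x : R) : is_derive x 1 g ((1 - expR x + x * expR x) / 2).
  have id_half := is_deriveZ (2^-1 : R) (is_derive_id x 1).
  have := is_deriveB (is_deriveD (is_derive_cst (1 : R) x 1) id_half)
    (is_deriveM (is_derive_expR x) (is_deriveB (is_derive_cst (1 : R) x 1) id_half)).
  move/is_derive_eq; apply.
  by rewrite /cst /GRing.scale /= !fctE /= -[_ *: x]/(2^-1 * x); lra.
have [|c _ gv] := MVT_segment v0 (fun x _ => g_derive x).
  by apply: derivable_within_continuous => x _; case: (g_derive x).
suff : 0 <= g v - g 0 by rewrite !gE expR0; lra.
rewrite gv; apply: mulr_ge0; last lra.
apply: divr_ge0 => //.
have ec := expR_gt0 c.
have : (1 - c) * expR c <= 1.
  rewrite -[leRHS](mulVf (lt0r_neq0 ec)) ler_pM2r //.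
  by have := expR_ge1Dx (- c); rewrite expRN.
lra.
Qed.

Lemma bernoulli_mgf_slope_le (t x : R) : 0 <= t <= 1 -> 0 <= x ->
  t * (1 - t) * (expR x - 1) <= x / 4 * (1 - t + t * expR x).
Proof.
move=> /andP[t0 t1] x0.
set r := expR (x / 2).
have rr : expR x = r * r by rewrite /r -expRD; congr expR; lra.
have r1 : 1 <= r by have := expR_ge1Dx (x / 2); rewrite -/r; lra.
have r_sub1 : r - 1 <= x / 4 * (r + 1).
  have /expR_mul_1_sub_half : 0 <= x / 2 by lra.
  by rewrite -/r; nra.
have amgm : t * (1 - t) * ((r + 1) * (r + 1)) <= 1 - t + t * (r * r).
  by have := sqr_ge0 ((1 - t) - t * r); rewrite expr2; nra.
have : 0 <= t * (1 - t) * (r + 1) by apply: mulr_ge0; [apply: mulr_ge0|]; lra.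
move=> /ler_wpM2l /(_ _ _ r_sub1); rewrite rr; nra.
Qed.

Lemma bernoulli_mgf_le_ge0 (t u : R) : 0 <= t <= 1 -> 0 <= u ->
  1 - t + t * expR u <= expR (t * u + u ^+ 2 / 8).
Proof.
move=> t01 u0.
have scaleE (c y : R) : c *: y = c * y by [].
(* [H] is nonincreasing on [0, +oo[ and [H 0 = 1] *)
pose H := ((cst (1 - t) + t *: expR) * (expR \o (- t *: id - 8^-1 *: id ^+ 2)) : R -> R).
have HE y : H y = (1 - t + t * expR y) * expR (- (t * y + y ^+ 2 / 8)).
  rewrite /H /= !fctE /= !scaleE.
  by congr (_ * expR _); lra.
pose dH (x : R) := expR (- (t * x + x ^+ 2 / 8)) *
  ((1 - t + t * expR x) * (- t - x / 4) + t * expR x).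
have H_derive (x : R) : is_derive x 1 H (dH x).
  have exponent := is_deriveB (is_deriveZ (- t) (is_derive_id x 1))
    (is_deriveZ (8^-1 : R) (is_deriveX 2 (is_derive_id x 1))).
  have := is_deriveM
    (is_deriveD (is_derive_cst (1 - t) x 1) (is_deriveZ t (is_derive_expR x)))
    (is_derive1_comp (is_derive_expR _) exponent).
  move/is_derive_eq; apply.
  rewrite /dH /cst /GRing.scale /= !fctE /= !scaleE expr1.
  have -> : - t * x - 8^-1 * x ^+ 2 = - (t * x + x ^+ 2 / 8) by lra.
  lra.
have [|c] := MVT_segment u0 (fun x _ => H_derive x).
  by apply: derivable_within_continuous => x _; case: (H_derive x).
rewrite in_itv /= => /andP[c0 _] Hu.
have : H u - H 0 <= 0.
  rewrite Hu; apply: mulr_le0_ge0; last lra.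
  apply: mulr_ge0_le0; first exact: expR_ge0.
  by have := bernoulli_mgf_slope_le t01 c0; lra.
rewrite !HE expR0 mulr1 expRN.
have -> : - (t * 0 + 0 ^+ 2 / 8) = 0 :> R by rewrite expr0n /=; lra.
by rewrite expR0 mulr1 subr_le0 ler_pdivrMr ?expR_gt0 //; lra.
Qed.

Lemma bernoulli_mgf_le (t u : R) : 0 <= t <= 1 ->
  1 - t + t * expR u <= expR (t * u + u ^+ 2 / 8).
Proof.
move=> /andP[t0 t1]; have [u0|u0] := leP 0 u.
  by apply: bernoulli_mgf_le_ge0 => //; apply/andP.
have : 1 - (1 - t) + (1 - t) * expR (- u) <= expR ((1 - t) * - u + (- u) ^+ 2 / 8).
  by apply: bernoulli_mgf_le_ge0; [apply/andP; split|]; lra.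
move=> /(ler_wpM2l (expR_ge0 u)); rewrite -expRD expRN mulrDr mulrCA.
rewrite mulfV ?gt_eqF ?expR_gt0 // sqrrN.
have -> : u + ((1 - t) * - u + u ^+ 2 / 8) = t * u + u ^+ 2 / 8 by ring.
lra.
Qed.

Lemma hoeffding_lemma_fin (I : finType) (p v : I -> R) (a D s : R) :
  0 < D -> (forall i, 0 <= p i) -> \sum_i p i = 1 ->
  (forall i, a <= v i <= a + D) ->
  \sum_i p i * expR (s * v i) <=
    expR (s * (\sum_i p i * v i) + s ^+ 2 * D ^+ 2 / 8).
Proof.
move=> D0 p0 p1 vab.
pose l i := (v i - a) / D.
have l01 i : 0 <= l i <= 1.
  have /andP[va vD] := vab i.
  rewrite /l divr_ge0 ?subr_ge0 ?(ltW D0) //=.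
  by rewrite ler_pdivrMr // mul1r lerBlDl.
have convex_bound i :
    expR (s * v i) <= (1 - l i) * expR (s * a) + l i * expR (s * (a + D)).
  have /andP[l0 l1] := l01 i.
  have := convex_expR (Itv01 l0 l1) (s * (a + D)) (s * a).
  rewrite !convRE /= /unstable.onem.
  have -> : l i * (s * (a + D)) + (1 - l i) * (s * a) = s * v i.
    by rewrite /l; field; exact: lt0r_neq0.
  lra.
set mu := \sum_i p i * v i; set th := (mu - a) / D.
have sum_l : \sum_i p i * l i = th.
  rewrite /th /mu -[a in RHS]mul1r -p1 mulr_suml -sumrB mulr_suml.
  by apply: eq_bigr => i _; rewrite /l; ring.
have th01 : 0 <= th <= 1.
  rewrite -sum_l sumr_ge0 => [/=|i _]; last by rewrite mulr_ge0 //; case/andP: (l01 i).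
  rewrite -p1 ler_sum // => i _; rewrite ler_piMr //; by case/andP: (l01 i).
apply: (@le_trans _ _ (\sum_i (expR (s * a) * p i +
    (expR (s * (a + D)) - expR (s * a)) * (p i * l i)))).
  apply: ler_sum => i _.
  have -> : expR (s * a) * p i + (expR (s * (a + D)) - expR (s * a)) * (p i * l i) =
      p i * ((1 - l i) * expR (s * a) + l i * expR (s * (a + D))) by ring.
  exact: ler_wpM2l.
have := ler_wpM2l (expR_ge0 (s * a)) (bernoulli_mgf_le (s * D) th01).
rewrite -expRD.
have -> : s * a + (th * (s * D) + (s * D) ^+ 2 / 8) = s * mu + s ^+ 2 * D ^+ 2 / 8.
  by rewrite /th; field; exact: lt0r_neq0.
apply: le_trans.
by rewrite big_split /= -!mulr_sumr p1 sum_l mulr1 mulrDr expRD; lra.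
Qed.

Lemma chernoff_ffun (I : finType) (q : nat) (p g : I -> R) (x s : R) :
  0 <= s -> (forall i, 0 <= p i) ->
  \sum_(f : {ffun 'I_q -> I} | x < \sum_k g (f k)) \prod_k p (f k) <=
    expR (- s * x) * (\sum_i p i * expR (s * g i)) ^+ q.
Proof.
move=> s0 p0.
have -> : expR (- s * x) * (\sum_i p i * expR (s * g i)) ^+ q =
    \sum_(f : {ffun 'I_q -> I}) \prod_k p (f k) * expR (s * (\sum_k g (f k) - x)).
  rewrite -[in LHS](card_ord q) -prodr_const bigA_distr_bigA mulr_sumr /=.
  apply: eq_bigr => f _.
  rewrite mulrBr mulr_sumr addrC expRD expR_sum big_split /= mulNr; ring.
rewrite big_mkcond /=; apply: ler_sum => f _.
have pf0 : 0 <= \prod_k p (f k) by apply: prodr_ge0.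
case: ifP => [xf|_]; last by rewrite mulr_ge0 ?expR_ge0.
by rewrite ler_peMr // -expR0 ler_expR mulr_ge0 // subr_ge0 ltW.
Qed.

End hoeffding_lemma.

Lemma measurable_emp_mean (R : realType) (d : measure_display) (Omega : measurableType d)
    (X : nat -> Omega -> R) (q : nat) :
  (forall j, measurable_fun setT (X j)) -> measurable_fun setT (emp_mean X q).
Proof.
move=> mX; apply: measurable_funM; first exact: measurable_cst.
by apply: measurable_sum.
Qed.

Lemma emp_mean_ge (R : realType) (T : Type) (X : nat -> T -> R) (q : nat) (w : T) (v : R) :
  (0 < q)%N -> (forall j, v <= X j w) -> v <= emp_mean X q w.
Proof.
move=> q0 vX; rewrite /emp_mean ler_pdivlMl ?ltr0n //.
have -> : q%:R * v = \sum_(j < q) v by rewrite sumr_const card_ord mulr_natl.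
exact: ler_sum.
Qed.

Lemma emp_mean_le (R : realType) (T : Type) (X : nat -> T -> R) (q : nat) (w : T) (v : R) :
  (0 < q)%N -> (forall j, X j w <= v) -> emp_mean X q w <= v.
Proof.
move=> q0 Xv; rewrite /emp_mean ler_pdivrMl ?ltr0n //.
have -> : q%:R * v = \sum_(j < q) v by rewrite sumr_const card_ord mulr_natl.
exact: ler_sum.
Qed.

Section probability_facts.
Context (R : realType) (d : measure_display) (Omega : measurableType d)
  (P : probability Omega R).

Lemma measurable_funT_preimage (f : Omega -> R) (Y : set R) :
  measurable_fun setT f -> measurable Y -> measurable (f @^-1` Y).
Proof. by move=> mf mY; rewrite -[f @^-1` _]setTI; exact: mf. Qed.

Lemma measurable_funT_gt (f : Omega -> R) (y : R) :
  measurable_fun setT f -> measurable [set w | y < f w].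
Proof. by move=> mf; rewrite -preimage_itvoy; exact: measurable_funT_preimage. Qed.

Lemma measurable_funT_lt (f : Omega -> R) (y : R) :
  measurable_fun setT f -> measurable [set w | f w < y].
Proof. by move=> mf; rewrite -preimage_itvNyo; exact: measurable_funT_preimage. Qed.

Lemma le_measure_ae (Q : Omega -> Prop) (S T : set Omega) :
  {ae P, forall w, Q w} -> measurable S -> measurable T ->
  (forall w, Q w -> S w -> T w) -> (P S <= P T)%E.
Proof.
move=> [N [mN N0 notQN]] mS mT ST.
apply: (@le_trans _ _ (P (T `|` N))).
  apply: le_measure; rewrite ?inE //; first exact: measurableU.
  move=> w Sw; have [Qw|nQw] := pselect (Q w); first by left; apply: ST.
  by right; apply: notQN.
apply: (le_trans (measureU2 _ _ _)) => //.
by rewrite [X in (_ + X <= _)%E](_ : _ = 0%E) ?adde0 //; exact: N0.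
Qed.

Lemma measure_bigsetU_le (I : eqType) (s : seq I) (p : pred I) (F : I -> set Omega) :
  (forall i, measurable (F i)) ->
  (P (\big[setU/set0]_(i <- s | p i) F i) <= \sum_(i <- s | p i) P (F i))%E.
Proof.
move=> mF; elim: s => [|i s IH]; first by rewrite !big_nil measure0.
rewrite !big_cons; case: (p i) => //.
apply: (le_trans (measureU2 _ _ _)) => //; last exact: leeD.
by apply: bigsetU_measurable => j _.
Qed.

Lemma ae_ex (Q : Omega -> Prop) : {ae P, forall w, Q w} -> exists w, Q w.
Proof.
have PT : (0 < P setT)%E by rewrite probability_setT lte01.
exact: (@filter_ex _ _ (ae_properfilter_algebraOfSetsType PT)).
Qed.

Lemma probability_setC_ge (A : set Omega) (delta : R) :
  measurable A -> (P A <= delta%:E)%E -> ((1 - delta)%:E <= P (~` A))%E.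
Proof.
move=> mA; rewrite probability_setC // -[P A]fineK ?fin_num_measure // !lee_fin.
by rewrite lerD2l lerN2.
Qed.

Lemma limit_le_of_ae_le (X : nat -> Omega -> R) (c v : R) :
  {ae P, forall w, forall j, X j w <= v} ->
  {ae P, forall w, exists l, emp_mean X ^~ w @ \oo --> l /\ c <= l} -> c <= v.
Proof.
move=> Xv Xlim; have [w [wv [l [Xl cl]]]] := ae_ex (filterI Xv Xlim).
apply: le_trans cl _; apply: cvgr_to_le Xl _.
by exists 1%N => // n /= n1; exact: emp_mean_le.
Qed.

Lemma prob_gt_near_of_ae_lim (X : nat -> Omega -> R) (v p : R) :
  (forall n, measurable_fun setT (X n)) -> p < 1 ->
  {ae P, forall w, exists l, X ^~ w @ \oo --> l /\ v < l} ->
  \forall n \near \oo, (p%:E <= P [set w | (v < X n w)%R])%E.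
Proof.
move=> mX p1 ae_lim.
pose E (Q : nat) := \bigcap_(n in [set n : nat | (Q <= n)%N]) [set w | (v < X n w)%R].
have mE Q : measurable (E Q).
  by apply: bigcap_measurableType => n _; exact: measurable_funT_gt.
have E_sub Q Q' : (Q <= Q')%N -> E Q `<=` E Q'.
  by move=> QQ' w EQw n Q'n; apply: EQw; exact: leq_trans Q'n.
have mUE : measurable (\bigcup_Q E Q) by exact: bigcupT_measurable.
have E_ae : P (\bigcup_Q E Q) = 1%E.
  apply/le_anti/andP; split; first exact: probability_le1.
  rewrite -(probability_setT P); apply: (le_measure_ae ae_lim) => //.
  move=> w [l [Xl vl]] _.
  have [N _ XN] := cvgr_gt l Xl _ vl.
  by exists N => // n; exact: XN.
have PE_cvg : P \o E @ \oo --> P (\bigcup_Q E Q).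
  apply: nondecreasing_cvg_mu => //.
  by move=> Q Q' QQ'; apply/subsetPset; exact: E_sub.
have : \forall Q \near \oo, (p%:E <= (P \o E) Q)%E.
  apply: lte_lim => //; first by move=> Q Q' /E_sub; apply: le_measure; rewrite ?inE.
    by apply/cvg_ex; exists (P (\bigcup_Q E Q)).
  by rewrite (cvg_lim _ PE_cvg) // E_ae lte_fin.
apply: filterS => Q /le_trans; apply.
apply: le_measure; rewrite ?inE //; first exact: measurable_funT_gt.
by move=> w; apply => /=.
Qed.

Variable Z : nat -> Omega -> R.
Hypothesis mZ : forall j, measurable_fun setT (Z j).
Hypothesis Z_indep : mutually_independent P Z.
Hypothesis Z_ident : identically_distributed P Z.

Lemma measurable_preimages (q : nat) (B : 'I_q -> set R) :
  (forall k, measurable (B k)) -> measurable [set w | forall k : 'I_q, B k (Z k w)].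
Proof.
move=> mB.
have -> : [set w | forall k : 'I_q, B k (Z k w)] = \bigcap_(k in [set: 'I_q]) (Z k @^-1` B k).
  by apply/seteqP; split => w /= wB k; [move=> _|]; exact: wB.
apply: fin_bigcap_measurable; first exact: finite_finset.
by move=> k _; exact: measurable_funT_preimage.
Qed.

Lemma probability_iid_preimages (q : nat) (B : 'I_q -> set R) :
  (forall k, measurable (B k)) ->
  P [set w | forall k : 'I_q, B k (Z k w)] = (\prod_(k < q) P (Z 0 @^-1` B k))%E.
Proof.
move=> mB.
pose B' j := if insub j is Some k then B k else setT.
have mB' j : j \in index_iota 0 q -> measurable (B' j) by rewrite /B'; case: insub.
have -> : [set w | forall k : 'I_q, B k (Z k w)] =
    \bigcap_(j in [set j | j \in index_iota 0 q]) (Z j @^-1` B' j).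
  apply/seteqP; split => w /=.
    by move=> wB j /=; rewrite mem_index_iota => jq; rewrite /B' insubT.
  move=> wB k; have := wB (val k); rewrite /B' valK; apply => /=.
  by rewrite mem_index_iota /=.
rewrite Z_indep ?iota_uniq // big_mkord; apply: eq_bigr => k _.
by rewrite /B' valK Z_ident.
Qed.

End probability_facts.

Section bins.
Variables (R : realType) (a b : R) (m : nat).

(* [m.+1] bins of width [(b - a) / m]: the extra last bin [[b, b + width[] contains [b]. *)
Definition bin_width := (b - a) / m%:R.
Definition bin_lo (i : 'I_m.+1) := a + i%:R * bin_width.
Definition bin (i : 'I_m.+1) := [set x : R | bin_lo i <= x < bin_lo i + bin_width].
Definition bin_of (x : R) : 'I_m.+1 := inord (Num.truncn ((x - a) / bin_width)).

Lemma measurable_bin i : measurable (bin i).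
Proof.
have -> : bin i = [set` `[bin_lo i, bin_lo i + bin_width[%R].
  by apply/seteqP; split => x /=; rewrite in_itv.
exact: measurable_itv.
Qed.

Hypotheses (ab : a < b) (m0 : (0 < m)%N).

Lemma bin_width_gt0 : 0 < bin_width.
Proof. by rewrite divr_gt0 ?subr_gt0 ?ltr0n. Qed.

Lemma bin_width_mul : m%:R * bin_width = b - a.
Proof. by rewrite mulrC divfK // pnatr_eq0 -lt0n. Qed.

Lemma bin_lo_itv i : a <= bin_lo i <= b.
Proof.
have w0 := bin_width_gt0.
have : i%:R * bin_width <= m%:R * bin_width by rewrite ler_pM2r // ler_nat -ltnS.
rewrite bin_width_mul /bin_lo => ib.
by rewrite lerDl mulr_ge0 ?ler0n ?(ltW w0) //=; lra.
Qed.

Lemma bin_ofP x : a <= x <= b -> bin (bin_of x) x.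
Proof.
move=> /andP[ax xb]; have w0 := bin_width_gt0.
set y := (x - a) / bin_width.
have y0 : 0 <= y by rewrite divr_ge0 ?subr_ge0 // ltW.
have ym : y <= m%:R by rewrite ler_pdivrMr // bin_width_mul; lra.
have tm : (Num.truncn y < m.+1)%N by rewrite ltnS truncn_le_nat (le_lt_trans ym) ?ltr_nat.
have xE : x = a + y * bin_width by rewrite divfK ?gt_eqF //; lra.
have /andP[ty yt] := truncn_itv y0.
rewrite -(ler_pM2r w0) in ty; rewrite -(ltr_pM2r w0) mulrSr mulrDl mul1r in yt.
by rewrite /bin /bin_of /bin_lo inordK //= -/y; apply/andP; split; lra.
Qed.

Lemma bin_uniq i j x : bin i x -> bin j x -> i = j.
Proof.
rewrite /bin /bin_lo /= => /andP[ix xi] /andP[jx xj]; have w0 := bin_width_gt0.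
have ij : i%:R * bin_width < j.+1%:R * bin_width by rewrite mulrSr; lra.
have ji : j%:R * bin_width < i.+1%:R * bin_width by rewrite mulrSr; lra.
rewrite ltr_pM2r // ltr_nat ltnS in ij; rewrite ltr_pM2r // ltr_nat ltnS in ji.
by apply/val_inj/eqP; rewrite eqn_leq ij ji.
Qed.

End bins.

Section discretized_hoeffding.
Context (R : realType) (d : measure_display) (Omega : measurableType d)
  (P : probability Omega R).
Variable Z : nat -> Omega -> R.
Hypothesis mZ : forall j, measurable_fun setT (Z j).
Hypothesis Z_indep : mutually_independent P Z.
Hypothesis Z_ident : identically_distributed P Z.
Variables (a b : R) (m : nat).
Hypotheses (ab : a < b) (m0 : (0 < m)%N).
Hypothesis Z_itv : forall j, {ae P, forall w, a <= Z j w <= b}.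

Local Notation bin := (@bin _ a b m).
Local Notation bin_lo := (@bin_lo _ a b m).
Local Notation bin_width := (bin_width a b m).

Definition bin_prob (i : 'I_m.+1) := fine (P (Z 0 @^-1` bin i)).

Lemma bin_probE i : P (Z 0 @^-1` bin i) = (bin_prob i)%:E.
Proof.
rewrite fineK // fin_num_measure //.
by apply: measurable_funT_preimage => //; exact: measurable_bin.
Qed.

Lemma bin_prob_ge0 i : 0 <= bin_prob i.
Proof. by rewrite -lee_fin -bin_probE measure_ge0. Qed.

Lemma bin_prob_sum1 : \sum_i bin_prob i = 1.
Proof.
have mZbin i : measurable (Z 0 @^-1` bin i).
  by apply: measurable_funT_preimage => //; exact: measurable_bin.
apply/EFin_inj; rewrite -sumEFin.
under eq_bigr do rewrite -bin_probE.
rewrite -measure_bigsetU_ord //; last first.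
  by move=> i j _ _ [x [/= xi xj]]; exact: bin_uniq xi xj.
apply/le_anti/andP; split; first by apply: probability_le1; exact: bigsetU_measurable.
rewrite -(probability_setT P); apply: le_measure_ae (Z_itv 0) _ _ _ => //.
  exact: bigsetU_measurable.
move=> w Zw _; rewrite (bigD1 (bin_of a b m (Z 0 w))) //=.
by left; exact: bin_ofP.
Qed.

Definition bin_event (q : nat) (s : {ffun 'I_q -> 'I_m.+1}) :=
  [set w | forall k : 'I_q, bin (s k) (Z k w)].

Lemma measurable_bin_event q (s : {ffun 'I_q -> 'I_m.+1}) : measurable (bin_event s).
Proof. exact: (measurable_preimages mZ (fun k => measurable_bin a b (s k))). Qed.

Lemma probability_bin_event q (s : {ffun 'I_q -> 'I_m.+1}) :
  P (bin_event s) = (\prod_k bin_prob (s k))%:E.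
Proof.
rewrite (probability_iid_preimages Z_indep Z_ident (fun k => measurable_bin a b (s k))).
by rewrite -prodEFin; apply: eq_bigr => k _; rewrite bin_probE.
Qed.

Lemma prob_sum_gt_le_bins (q : nat) (f : R -> R) (g : 'I_m.+1 -> R) (x : R) :
  measurable [set w | (x < \sum_(k < q) f (Z k w))%R] ->
  (forall i y, bin i y -> f y <= g i) ->
  (P [set w | (x < \sum_(k < q) f (Z k w))%R] <=
   (\sum_(s : {ffun 'I_q -> 'I_m.+1} | (x < \sum_k g (s k))%R) \prod_k bin_prob (s k))%:E)%E.
Proof.
move=> mS fg.
pose U := \big[setU/set0]_(s : {ffun 'I_q -> 'I_m.+1} | (x < \sum_k g (s k))%R) bin_event s.
apply: (@le_trans _ _ (P U)).
  apply: (le_measure_ae (ae_foralln Z_itv)) => //.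
    by apply: bigsetU_measurable => s _; exact: measurable_bin_event.
  move=> w Zw xS; pose s := [ffun k : 'I_q => bin_of a b m (Z k w)].
  have sw k : bin (s k) (Z k w) by rewrite ffunE; exact: bin_ofP.
  rewrite /U (bigD1 s) /=; first by left.
  by apply: (lt_le_trans xS); apply: ler_sum => k _; exact: fg.
apply: le_trans; first by apply: measure_bigsetU_le => s; exact: measurable_bin_event.
by rewrite -sumEFin; apply: lee_sum => s _; rewrite probability_bin_event.
Qed.

Lemma chernoff_bins (q : nat) (f : R -> R) (g : 'I_m.+1 -> R) (x s c : R) :
  measurable [set w | (x < \sum_(k < q) f (Z k w))%R] ->
  (forall i y, bin i y -> f y <= g i) -> 0 <= s ->
  (forall i, c <= g i <= c + (b - a)) ->
  (P [set w | (x < \sum_(k < q) f (Z k w))%R] <=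
    (expR (- s * x + q%:R * (s * (\sum_i bin_prob i * g i) +
                             s ^+ 2 * (b - a) ^+ 2 / 8)))%:E)%E.
Proof.
move=> mS fg s0 gc.
apply: (le_trans (prob_sum_gt_le_bins mS fg)); rewrite lee_fin.
apply: (le_trans (chernoff_ffun _ _ _ s0 bin_prob_ge0)).
rewrite expRD ler_pM2l ?expR_gt0 // expRM_natl.
apply: lerXn2r; rewrite ?nnegrE ?expR_ge0 //.
  by apply: sumr_ge0 => i _; rewrite mulr_ge0 ?bin_prob_ge0 ?expR_ge0.
apply: hoeffding_lemma_fin => //; last exact: bin_prob_sum1.
  by rewrite subr_gt0.
exact: bin_prob_ge0.
Qed.

Definition bin_mean := \sum_i bin_prob i * bin_lo i.

Lemma chernoff_upper (q : nat) (x s : R) : 0 <= s ->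
  (P [set w | (x < \sum_(k < q) Z k w)%R] <=
    (expR (- s * x + q%:R * (s * (bin_mean + bin_width) +
                             s ^+ 2 * (b - a) ^+ 2 / 8)))%:E)%E.
Proof.
move=> s0.
have -> : bin_mean + bin_width = \sum_i bin_prob i * (bin_lo i + bin_width).
  rewrite /bin_mean -[bin_width in LHS]mul1r -bin_prob_sum1 mulr_suml.
  by rewrite -big_split /=; apply: eq_bigr => i _; rewrite [RHS]mulrDr.
apply: (@chernoff_bins q (fun y => y) _ x s (a + bin_width)) => //.
- apply: measurable_funT_gt; exact: measurable_sum.
- by move=> i y /andP[_ /ltW].
- by move=> i; have /andP[al lb] := bin_lo_itv ab m0 i; apply/andP; split; lra.
Qed.

Lemma chernoff_lower (q : nat) (x s : R) : 0 <= s ->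
  (P [set w | (\sum_(k < q) Z k w < x)%R] <=
    (expR (s * x - q%:R * (s * bin_mean) + q%:R * (s ^+ 2 * (b - a) ^+ 2 / 8)))%:E)%E.
Proof.
move=> s0.
have -> : [set w | (\sum_(k < q) Z k w < x)%R] = [set w | (- x < \sum_(k < q) - Z k w)%R].
  by apply/seteqP; split => w /=; rewrite sumrN ltrN2.
apply: le_trans.
  apply: (@chernoff_bins q (fun y => - y) (fun i => - bin_lo i) (- x) s (- b)) => //.
  - apply: measurable_funT_gt; apply: measurable_sum => k.
    exact: measurableT_comp.
  - by move=> i y /andP[ly _]; rewrite lerN2.
  - by move=> i; have /andP[al lb] := bin_lo_itv ab m0 i; apply/andP; split; lra.
rewrite lee_fin ler_expR /bin_mean.
under eq_bigr do rewrite mulrN.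
by rewrite sumrN; lra.
Qed.

Lemma limit_le_bin_mean (c : R) :
  {ae P, forall w, exists l, emp_mean Z ^~ w @ \oo --> l /\ c <= l} ->
  c <= bin_mean + bin_width.
Proof.
move=> Z_lim; rewrite leNgt; apply/negP => mean_lt_c.
set mu := bin_mean + bin_width in mean_lt_c *; set e := (c - mu) / 2.
have e0 : 0 < e by rewrite divr_gt0 // subr_gt0.
have D0 : 0 < b - a by rewrite subr_gt0.
pose kap := 2 * e ^+ 2 / (b - a) ^+ 2.
have kap0 : 0 < kap by rewrite /kap divr_gt0 ?exprn_gt0 // mulr_gt0 // exprn_gt0.
have near_half : \forall Q \near \oo,
    ((2^-1)%:E <= P [set w | (mu + e < emp_mean Z Q w)%R])%E.
  apply: prob_gt_near_of_ae_lim => [n||]; first exact: measurable_emp_mean.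
    by rewrite invf_lt1 ?ltr1n.
  apply: filterS Z_lim => w [l [Zl cl]]; exists l; split => //.
  by apply: lt_le_trans cl; rewrite /e; lra.
have [Q [Q_half [Q_kap Q0]]] := filter_ex
  (filterI near_half (filterI (nbhs_infty_ger kap^-1) (nbhs_infty_gt 0))).
have {}Q_kap : 1 <= Q%:R * kap by rewrite -ler_pdivrMr // div1r.
pose s := 4 * e / (b - a) ^+ 2.
have s0 : 0 <= s by rewrite /s divr_ge0 ?sqr_ge0 // mulr_ge0 // ltW.
have mean_sub : [set w | (mu + e < emp_mean Z Q w)%R] `<=`
    [set w | (Q%:R * (mu + e) < \sum_(k < Q) Z k w)%R].
  by move=> w; rewrite /= /emp_mean ltr_pdivlMl ?ltr0n.
have mA : [set w | (mu + e < emp_mean Z Q w)%R] \in measurable.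
  by rewrite inE; apply: measurable_funT_gt; exact: measurable_emp_mean.
have mB : [set w | (Q%:R * (mu + e) < \sum_(k < Q) Z k w)%R] \in measurable.
  by rewrite inE; apply: measurable_funT_gt; exact: measurable_sum.
have := le_trans Q_half (le_trans (le_measure _ mA mB mean_sub) (chernoff_upper Q _ s0)).
have -> : - s * (Q%:R * (mu + e)) + Q%:R * (s * mu + s ^+ 2 * (b - a) ^+ 2 / 8) =
    - (Q%:R * kap) by rewrite /s /kap /e; field; rewrite gt_eqF.
rewrite lee_fin => half_le.
have x_gt : 1 + Q%:R * kap < expR (Q%:R * kap).
  by apply: expR_gt1Dx; rewrite gt_eqF // mulr_gt0 // ltr0n.
have := ler_wpM2r (expR_ge0 (Q%:R * kap)) half_le.
rewrite -expRD addNr expR0; lra.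
Qed.

End discretized_hoeffding.

Lemma le_expR_of_slack (R : realType) (x y : R) :
  (forall e, 0 < e -> x <= expR (y + e)) -> x <= expR y.
Proof.
move=> x_le; apply/ler_addgt0Pr => e e0.
have ey0 : 0 < e / expR y by rewrite divr_gt0 ?expR_gt0.
have ln_pos : 0 < ln (1 + e / expR y) by apply: ln_gt0; lra.
have := x_le _ ln_pos; rewrite expRD lnK ?posrE; last lra.
by rewrite mulrDr mulr1 mulrCA mulfV ?gt_eqF ?expR_gt0 ?mulr1.
Qed.

Section hoeffding.
Context (R : realType) (d : measure_display) (Omega : measurableType d)
  (P : probability Omega R).
Variable Z : nat -> Omega -> R.
Hypothesis mZ : forall j, measurable_fun setT (Z j).
Hypothesis Z_indep : mutually_independent P Z.
Hypothesis Z_ident : identically_distributed P Z.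
Variables a b : R.
Hypothesis Z_itv : forall j, {ae P, forall w, a <= Z j w <= b}.
Variable c : R.
Hypothesis Z_lim : {ae P, forall w, exists l, emp_mean Z ^~ w @ \oo --> l /\ c <= l}.

(* Hoeffding's inequality, with an a.s. lower bound [c] on the limit of the
   empirical means in place of the mean of [Z 0]. *)
Theorem hoeffding_below_limit (t : R) (q : nat) : a < b -> 0 < t ->
  (P [set w | (\sum_(k < q) Z k w < q%:R * (c - t))%R] <=
    (expR (- (2 * q%:R * t ^+ 2 / (b - a) ^+ 2)))%:E)%E.
Proof.
move=> ab t0.
have D0 : 0 < b - a by rewrite subr_gt0.
have mS : measurable [set w | (\sum_(k < q) Z k w < q%:R * (c - t))%R].
  by apply: measurable_funT_lt; exact: measurable_sum.
rewrite -[P _]fineK ?fin_num_measure // lee_fin.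
apply: le_expR_of_slack => e e0.
pose m := (Num.truncn (4 * q%:R * t / ((b - a) * e))).+1.
have m_large : 4 * q%:R * t / ((b - a) * e) < m%:R := truncnS_gt _.
have m0 : (0 < m)%N by [].
pose s := 4 * t / (b - a) ^+ 2.
have s0 : 0 <= s by rewrite divr_ge0 ?sqr_ge0 // mulr_ge0 // ltW.
have := chernoff_lower mZ Z_indep Z_ident ab m0 Z_itv q (q%:R * (c - t)) s0.
rewrite -lee_fin fineK ?fin_num_measure // => /le_trans; apply; rewrite lee_fin ler_expR.
have := limit_le_bin_mean mZ Z_indep Z_ident ab m0 Z_itv Z_lim.
rewrite /bin_width.
set mu := bin_mean P Z a b m => c_le.
have m_pos : 0 < m%:R :> R by rewrite ltr0n.
rewrite ltr_pdivrMr ?mulr_gt0 // in m_large.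
have slack : 4 * q%:R * t / ((b - a) * m%:R) <= e by rewrite ler_pdivrMr ?mulr_gt0 //; lra.
have c_mu : s * q%:R * (c - (mu + (b - a) / m%:R)) <= 0.
  by apply: mulr_ge0_le0; [rewrite mulr_ge0 ?ler0n | rewrite subr_le0].
have -> : s * (q%:R * (c - t)) - q%:R * (s * mu) + q%:R * (s ^+ 2 * (b - a) ^+ 2 / 8) =
    s * q%:R * (c - (mu + (b - a) / m%:R)) + 4 * q%:R * t / ((b - a) * m%:R)
    - 2 * q%:R * t ^+ 2 / (b - a) ^+ 2.
  by rewrite /s; field; rewrite !gt_eqF.
lra.
Qed.

Lemma prob_lt_limit_degenerate (q : nat) (B : Omega -> R) : (0 < q)%N -> b <= a ->
  measurable_fun setT B -> (forall w, emp_mean Z q w <= B w) ->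
  P [set w | B w < c] = 0%E.
Proof.
move=> q0 ba mB B_ge; have Z_itvn := ae_foralln Z_itv.
have c_le : c <= b.
  apply: limit_le_of_ae_le Z_lim; apply: filterS Z_itvn => w Zw j.
  by case/andP: (Zw j).
apply/le_anti/andP; split; last exact: measure_ge0.
rewrite -(measure0 P); apply: le_measure_ae Z_itvn _ measurable0 _.
  exact: measurable_funT_lt.
move=> w Zw /= Bc; suff : a <= emp_mean Z q w by have := B_ge w; lra.
by apply: emp_mean_ge => // j; case/andP: (Zw j).
Qed.

Theorem hoeffding_confidence (q : nat) (B : Omega -> R) (delta : R) :
  (0 < q)%N -> 0 < delta < 1 -> measurable_fun setT B ->
  (forall w, emp_mean Z q w + Num.sqrt (ln (2 / delta) * (b - a) ^+ 2 / (2 * q%:R)) <= B w) ->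
  (P [set w | (B w < c)%R] <= delta%:E)%E.
Proof.
move=> q0 /andP[d0 d1] mB; set t := Num.sqrt _ => B_ge.
have [ab|ba] := ltP a b; last first.
  have t0 : 0 <= t by exact: sqrtr_ge0.
  rewrite (@prob_lt_limit_degenerate q B) ?lee_fin ?(ltW d0) // => w.
  by have := B_ge w; lra.
have D0 : 0 < b - a by rewrite subr_gt0.
have ln_pos : 0 < ln (2 / delta) by apply: ln_gt0; rewrite ltr_pdivlMr // mul1r; lra.
have q_pos : 0 < q%:R :> R by rewrite ltr0n.
have t2 : t ^+ 2 = ln (2 / delta) * (b - a) ^+ 2 / (2 * q%:R).
  by rewrite sqr_sqrtr // divr_ge0 ?mulr_ge0 ?sqr_ge0 // ltW.
have t0 : 0 < t by rewrite sqrtr_gt0 divr_gt0 ?mulr_gt0 ?exprn_gt0.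
have mean_below : [set w | B w < c] `<=` [set w | \sum_(k < q) Z k w < q%:R * (c - t)].
  by move=> w /= Bc; rewrite -ltr_pdivrMl //; have := B_ge w; rewrite /emp_mean; lra.
apply: le_trans (le_measure _ _ _ mean_below) _; rewrite ?inE.
- exact: measurable_funT_lt.
- by apply: measurable_funT_lt; exact: measurable_sum.
apply: le_trans (hoeffding_below_limit q ab t0) _.
have -> : 2 * q%:R * t ^+ 2 / (b - a) ^+ 2 = ln (2 / delta).
  by rewrite t2; field; rewrite !gt_eqF.
rewrite lee_fin expRN lnK ?posrE ?divr_gt0 // invf_div ler_pdivrMr //; lra.
Qed.

End hoeffding.

Lemma rkhs_norm_ge0 (R : realType) (n : nat) (Adom : set 'rV[R]_n)
    (k : 'rV[R]_n -> 'rV[R]_n -> R) (f : 'rV[R]_n -> R) :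
  (0 <= rkhs_norm Adom k f)%E.
Proof.
apply: ereal_sup_ubound; exists 0%N, (fun=> 0), (fun=> 0).
by split; [case | rewrite /comb_sqnorm big_ord0 | rewrite big_ord0].
Qed.

Theorem theorem1 (R : realType) (n : nat) (Adom : set 'rV[R]_n)
  (k : 'rV[R]_n -> 'rV[R]_n -> R) (h : 'rV[R]_n -> R)
  (N Nhat : nat) (a : 'I_N -> 'rV[R]_n) (alpha0 : 'I_N -> R) (abar : R)
  (d : measure_display) (Omega : measurableType d) (P : probability Omega R)
  (alpha : nat -> Omega -> 'I_(Nhat - N) -> R)
  (x : nat -> Omega -> 'I_(Nhat - N) -> 'rV[R]_n)
  (Mx mn delta : R) (q : nat) (B : Omega -> R) :
  is_kernel Adom k ->
  (rkhs_norm Adom k h < +oo)%E ->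
  (forall s, Adom (a s)) ->
  (N < Nhat)%N -> 0 < abar ->
  (* random parameters: admissible almost surely *)
  (forall j, {ae P, forall w, admissible Adom abar (alpha j w) (x j w)}) ->
  (* the norms Z_j = ||rho_{A,j}|| are measurable, independent, identically distributed *)
  let Z := fun j w => rho_norm k alpha0 a (alpha j w) (x j w) in
  (forall j, measurable_fun setT (Z j)) ->
  mutually_independent P Z ->
  identically_distributed P Z ->
  (* Mx / mn: maximum / minimum of ||rho_A|| over admissible alpha, x *)
  (exists (al : 'I_(Nhat - N) -> R) (xs : 'I_(Nhat - N) -> 'rV[R]_n), admissible Adom abar al xs /\ rho_norm k alpha0 a al xs = Mx) ->
  (forall (al : 'I_(Nhat - N) -> R) (xs : 'I_(Nhat - N) -> 'rV[R]_n), admissible Adom abar al xs -> rho_norm k alpha0 a al xs <= Mx) ->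
  (exists (al : 'I_(Nhat - N) -> R) (xs : 'I_(Nhat - N) -> 'rV[R]_n), admissible Adom abar al xs /\ rho_norm k alpha0 a al xs = mn) ->
  (forall (al : 'I_(Nhat - N) -> R) (xs : 'I_(Nhat - N) -> 'rV[R]_n), admissible Adom abar al xs -> mn <= rho_norm k alpha0 a al xs) ->
  (* ||h||_k <= lim_{q -> oo} (1/q) sum_{j<q} ||rho_{A,j}|| *)
  {ae P, forall w, exists l : R,
     emp_mean Z ^~ w @ \oo --> l /\ (rkhs_norm Adom k h <= l%:E)%E} ->
  0 < delta < 1 -> (0 < q)%N ->
  let w_i := Num.sqrt (ln (2 / delta) * (Mx - mn) ^+ 2 / (2 * q%:R)) in
  measurable_fun setT B ->
  (forall w, emp_mean Z q w + w_i <= B w) ->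
  ((1 - delta)%:E <= P [set w | (rkhs_norm Adom k h <= (B w)%:E)%E])%E.
Proof.
move=> _ h_fin _ _ _ adm Z mZ Z_indep Z_ident _ le_Mx _ ge_mn h_lim d01 q0 w_i mB B_ge.
have Z_itv j : {ae P, forall w, mn <= Z j w <= Mx}.
  by apply: filterS (adm j) => w adm_w; rewrite ge_mn ?le_Mx.
set c := fine (rkhs_norm Adom k h).
have hc : rkhs_norm Adom k h = c%:E by rewrite fineK // ge0_fin_numE ?rkhs_norm_ge0.
have c_lim : {ae P, forall w, exists l, emp_mean Z ^~ w @ \oo --> l /\ c <= l}.
  by apply: filterS h_lim => w [l [Zl hl]]; exists l; rewrite -lee_fin -hc.
have -> : [set w | (rkhs_norm Adom k h <= (B w)%:E)%E] = ~` [set w | B w < c].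
  by apply/seteqP; split => w /=; rewrite hc lee_fin leNgt => /negP.
apply: probability_setC_ge; first exact: measurable_funT_lt.
exact: (hoeffding_confidence mZ Z_indep Z_ident Z_itv c_lim q0 d01 mB B_ge).
Qed.
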